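(* For $i=1,2$ let $(E_i,F_i)$ be a pair of dual spaces over a division ring $\mathbb{K}_i$, and let $g:\mathcal{L}_{F_1}(E_1)\to\mathcal{L}_{F_2}(E_2)$ be a map preserving arbitrary joins and sending atoms to atoms or $0$, such that $g(\mathcal{L}_{F_1}(E_1))$ has length $\ge3$. Then there is a semilinear map $f:E_1\to E_2$ inducing $g$, i.e. $g(\mathbb{K}_1v)=\mathbb{K}_2f(v)$ for all $v\in E_1$.
   Context: A pair of dual spaces $(E,F)$ over a division ring $\mathbb{K}$ consists of a left vector space $E$ and a right vector space $F$ over $\mathbb{K}$ with a non-degenerate bilinear map $\beta:E\times F\to\mathbb{K}$. For $A\subseteq E$, $A^\perp:=\{y\in F;\beta(x,y)=0\ \forall x\in A\}$, similarly for $B\subseteq F$; $\mathcal{L}_F(E):=\{A\subseteq E;A^{\perp\perp}=A\}$ ordered by inclusion (a complete lattice whose atoms are the one-dimensional subspaces). A semilinear map $f:E_1\to E_2$ is an additive map for which there is a homomorphism of division rings $\sigma:\mathbb{K}_1\to\mathbb{K}_2$ with $f(\lambda v)=\sigma(\lambda)f(v)$. $\mathbb{K}_2f(v)$ denotes the subspace spanned by $f(v)$ (zero if $f(v)=0$). *)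

From mathcomp Require Import all_boot all_algebra.
Set Implicit Arguments. Unset Strict Implicit. Unset Printing Implicit Defensive.
Import GRing.Theory.
Local Open Scope ring_scope.

Definition division_ring (K : unitRingType) : Prop :=
  forall x : K, x != 0 -> x \is a GRing.unit.

Definition subset_of {T : Type} (A B : T -> Prop) : Prop := forall x, A x -> B x.

(* E is a left K-vector space (lmodType K); F is a right K-vector space,
   i.e. a left module over the converse ring K^c: for y : F and a : K,
   (a *: y) denotes the right product y a. *)
Section DualPair.
Variables (K : unitRingType) (E : lmodType K) (F : lmodType K^c).
Variable b : E -> F -> K.

Definition bilinear_form : Prop :=
  [/\ forall x1 x2 y, b (x1 + x2) y = b x1 y + b x2 y,
      forall x y1 y2, b x (y1 + y2) = b x y1 + b x y2,
      forall (a : K) x y, b (a *: x) y = a * b x y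
    & forall (a : K) x (y : F), b x ((a : K^c) *: y) = b x y * a].

Definition nondegenerate : Prop :=
  (forall x, (forall y, b x y = 0) -> x = 0) /\
  (forall y, (forall x, b x y = 0) -> y = 0).

Definition dual_pair : Prop := bilinear_form /\ nondegenerate.

Definition perpE (A : E -> Prop) : F -> Prop := fun y => forall x, A x -> b x y = 0.
Definition perpF (B : F -> Prop) : E -> Prop := fun x => forall y, B y -> b x y = 0.

Definition is_closed (A : E -> Prop) : Prop := perpF (perpE A) = A.
Definition LF := { A : E -> Prop | is_closed A }.

Definition cjoin (S : LF -> Prop) : E -> Prop :=
  perpF (perpE (fun x => exists2 A : LF, S A & proj1_sig A x)).

Definition zero_set : E -> Prop := fun x => x = 0.

Definition atom (A : LF) : Prop :=
  proj1_sig A <> zero_set /\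
  forall B : LF, subset_of (proj1_sig B) (proj1_sig A) ->
    proj1_sig B = zero_set \/ proj1_sig B = proj1_sig A.

End DualPair.

Definition line (K : unitRingType) (E : lmodType K) (v : E) : E -> Prop :=
  fun x => exists a : K, x = a *: v.

Definition preserves_joins (K1 K2 : unitRingType)
  (E1 : lmodType K1) (F1 : lmodType K1^c) (b1 : E1 -> F1 -> K1)
  (E2 : lmodType K2) (F2 : lmodType K2^c) (b2 : E2 -> F2 -> K2)
  (g : LF b1 -> LF b2) : Prop :=
  forall (S : LF b1 -> Prop) (A : LF b1),
    proj1_sig A = cjoin S ->
    proj1_sig (g A) = cjoin (fun B => exists2 A', S A' & B = g A').

(* the image of g (as a subposet of L_F2(E2)) has length >= 3:
   it contains a chain of 4 distinct elements *)
Definition image_length_ge3 (K1 K2 : unitRingType)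
  (E1 : lmodType K1) (F1 : lmodType K1^c) (b1 : E1 -> F1 -> K1)
  (E2 : lmodType K2) (F2 : lmodType K2^c) (b2 : E2 -> F2 -> K2)
  (g : LF b1 -> LF b2) : Prop :=
  exists A0 A1 A2 A3 : LF b1,
    let s i := proj1_sig (g i) in
    [/\ subset_of (s A0) (s A1) /\ s A0 <> s A1,
        subset_of (s A1) (s A2) /\ s A1 <> s A2
      & subset_of (s A2) (s A3) /\ s A2 <> s A3].

Definition semilinear_map (K1 K2 : unitRingType) (E1 : lmodType K1) (E2 : lmodType K2)
  (f : E1 -> E2) : Prop :=
  (forall x y, f (x + y) = f x + f y) /\
  exists sigma : {rmorphism K1 -> K2}, forall (a : K1) v, f (a *: v) = sigma a *: f v.

From HB Require Import structures.
From mathcomp Require Import all_boot all_algebra.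
From Stdlib Require Import Classical ClassicalEpsilon FunctionalExtensionality PropExtensionality.
Set Implicit Arguments. Unset Strict Implicit. Unset Printing Implicit Defensive.
Local Open Scope ring_scope.
Import GRing.Theory.

(* Since g preserves joins and sends atoms to atoms or 0, it maps each line
   K1 v to a line K2 (rep v) for a chosen vector rep v, and maps the plane
   spanned by u and w into the plane spanned by rep u and rep w; the length
   hypothesis yields three vectors whose reps are linearly independent.  What
   remains is the vector form of the fundamental theorem of projective
   geometry for such a map h = rep.  Fix a representative y' of the line of
   h y.  For every x with h x independent of h y there is a unique
   representative x' of h x such that y' + x' represents h (y + x).  Since
   the image of h does not lie in a plane, these normalisations agree along
   every triangle and glue to one map f with f v proportional to h v; f is
   additive, and the factor by which f scales a *: v does not depend on v,
   which defines the ring morphism sigma. *)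

Definition span2 (K : unitRingType) (E : lmodType K) (a b x : E) : Prop :=
  exists c d : K, x = c *: a + d *: b.
Definition free2 (K : unitRingType) (E : lmodType K) (a b : E) : Prop :=
  forall c d : K, c *: a + d *: b = 0 -> c = 0 /\ d = 0.
Definition free3 (K : unitRingType) (E : lmodType K) (a b c : E) : Prop :=
  forall x y z : K, x *: a + y *: b + z *: c = 0 -> [/\ x = 0, y = 0 & z = 0].
Definition proportional (K : unitRingType) (E : lmodType K) (a b : E) : Prop :=
  exists2 l : K, l != 0 & b = l *: a.

Lemma pred_ext (T : Type) (A B : T -> Prop) : (forall x, A x <-> B x) -> A = B.
Proof.
by move=> H; apply: functional_extensionality => x; apply: propositional_extensionality.
Qed.

Lemma strict_subset_elt (T : Type) (X Y : T -> Prop) :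
  subset_of X Y -> X <> Y -> exists2 x, Y x & ~ X x.
Proof.
move=> hXY hn; apply: NNPP => N; apply: hn; apply: pred_ext => x; split; first exact: hXY.
by move=> hy; apply: NNPP => hx; apply: N; exists x.
Qed.

Section DivisionRingLinearAlgebra.
Variable K : unitRingType.
Hypothesis hK : division_ring K.

Lemma mulVr_nz (l : K) : l != 0 -> l^-1 * l = 1.
Proof. by move=> /hK; apply: mulVr. Qed.
Lemma mulrV_nz (l : K) : l != 0 -> l * l^-1 = 1.
Proof. by move=> /hK; apply: mulrV. Qed.
Lemma mulr_nz (l m : K) : l != 0 -> m != 0 -> l * m != 0.
Proof.
move=> hl hm; apply/eqP=> H; move/eqP: hm; apply.
by rewrite -[m]mul1r -(mulVr_nz hl) -mulrA H mulr0.
Qed.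
Lemma mulr_nz_eq0 (c l : K) : l != 0 -> c * l = 0 -> c = 0.
Proof. by move=> hl H; rewrite -[c]mulr1 -(mulrV_nz hl) mulrA H mul0r. Qed.

Variable E : lmodType K.
Implicit Types (a b c x y z v w u : E).

Lemma scaler_nz_eq0 (l : K) v : l != 0 -> l *: v = 0 -> v = 0.
Proof. by move=> hl H; rewrite -[v]scale1r -(mulVr_nz hl) -scalerA H scaler0. Qed.
Lemma scalerIr_nz (l m : K) v : v != 0 -> l *: v = m *: v -> l = m.
Proof.
move=> hv H; apply/eqP; rewrite -subr_eq0; apply/negPn/negP => hlm.
by move/eqP: hv; apply; apply: (scaler_nz_eq0 hlm); rewrite scalerBl H subrr.
Qed.

Lemma proportional_refl a : proportional a a.
Proof. by exists 1; rewrite ?oner_neq0 ?scale1r. Qed.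
Lemma proportional_sym a b : proportional a b -> proportional b a.
Proof.
case=> l hl ->; exists l^-1; first exact: invr_neq0.
by rewrite scalerA mulVr_nz // scale1r.
Qed.
Lemma proportional_trans a b c : proportional a b -> proportional b c -> proportional a c.
Proof.
case=> l hl -> [m hm ->]; exists (m * l); first exact: mulr_nz.
by rewrite scalerA.
Qed.
Lemma proportional_scale (l : K) a : l != 0 -> proportional a (l *: a).
Proof. by move=> hl; exists l. Qed.
Lemma proportional0 b : proportional 0 b -> b = 0.
Proof. by case=> l _ ->; rewrite scaler0. Qed.
Lemma proportional_neq0 a b : proportional a b -> a != 0 -> b != 0.
Proof.
by move=> /proportional_sym hs; apply: contra_neq => H; apply: proportional0; rewrite -H.
Qed.

Lemma line_self a : line a a.
Proof. by exists 1; rewrite scale1r. Qed.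
Lemma line0 a : line a 0.
Proof. by exists 0; rewrite scale0r. Qed.
Lemma line0_eq : line (0 : E) = zero_set (E:=E).
Proof. by apply: pred_ext => x; split=> [[c ->]|->]; [rewrite scaler0 | apply: line0]. Qed.
Lemma proportional_in_line a b : proportional a b -> line a b.
Proof. by case=> l _ ->; exists l. Qed.
Lemma proportional_in_line_sym a b : proportional a b -> line b a.
Proof. by move/proportional_sym/proportional_in_line. Qed.
Lemma line_proportional a b x : proportional a b -> line a x -> line b x.
Proof.
case=> l hl -> [c ->]; exists (c * l^-1).
by rewrite scalerA -mulrA mulVr_nz // mulr1.
Qed.
Lemma line_proportionalr a b c : line a b -> proportional b c -> line a c.
Proof. by case=> k -> [l _ ->]; exists (l * k); rewrite scalerA. Qed.
Lemma lines_proportional a b : line a b -> line b a -> proportional a b.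
Proof.
case=> c hb [d ha]; have [c0|cn0] := eqVneq c 0; last by exists c.
have b0 : b = 0 by rewrite hb c0 scale0r.
by rewrite ha b0 scaler0; apply: proportional_refl.
Qed.
Lemma line_nz_proportional a v : line a v -> v != 0 -> proportional v a.
Proof.
case=> k -> hv; have kn0 : k != 0 by apply: contraNneq hv => ->; rewrite scale0r.
by apply: proportional_sym; exists k.
Qed.
Lemma proportional_line_eq a b : proportional a b -> line a = line b.
Proof.
by move=> hs; apply: pred_ext => x; split; apply: line_proportional => //; apply: proportional_sym.
Qed.

Lemma span2_l a b : span2 a b a.
Proof. by exists 1, 0; rewrite scale1r scale0r addr0. Qed.
Lemma span2_r a b : span2 a b b.
Proof. by exists 0, 1; rewrite scale1r scale0r add0r. Qed.
Lemma span2_sym a b x : span2 a b x -> span2 b a x.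
Proof. by case=> c [d ->]; exists d, c; rewrite addrC. Qed.
Lemma span2_sub a b u w x : span2 a b u -> span2 a b w -> span2 u w x -> span2 a b x.
Proof.
case=> u1 [u2 ->] [w1 [w2 ->]] [c [d ->]].
exists (c * u1 + d * w1), (c * u2 + d * w2).
by rewrite !scalerDr !scalerA !scalerDl addrACA.
Qed.
Lemma line_sub_span2 a b x : line a x -> span2 a b x.
Proof. by case=> c ->; exists c, 0; rewrite scale0r addr0. Qed.
Lemma span2_of_lines a b u w x : line a u -> line b w -> span2 u w x -> span2 a b x.
Proof.
move=> hu hw; apply: span2_sub; first exact: line_sub_span2.
by apply: span2_sym; apply: line_sub_span2.
Qed.
Lemma span2_sub_line a u w x : line a u -> line a w -> span2 u w x -> line a x.
Proof.
move=> hu hw hx; have [c [d ->]] := span2_sub (line_sub_span2 a hu) (line_sub_span2 a hw) hx.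
by exists (c + d); rewrite scalerDl.
Qed.

Lemma free2_sym a b : free2 a b -> free2 b a.
Proof. by move=> H c d; rewrite addrC => /H [-> ->]. Qed.
Lemma free2_neq0l a b : free2 a b -> a != 0.
Proof.
move=> H; apply/eqP=> a0; have := H 1 0; rewrite a0 scaler0 scale0r addr0.
by case=> // /eqP; rewrite oner_eq0.
Qed.
Lemma free2_neq0r a b : free2 a b -> b != 0.
Proof. by move/free2_sym/free2_neq0l. Qed.
Lemma free2_coef a b (c d c' d' : K) :
  free2 a b -> c *: a + d *: b = c' *: a + d' *: b -> c = c' /\ d = d'.
Proof.
move=> H E0; have : (c - c') *: a + (d - d') *: b = 0.
  by rewrite !scalerBl addrACA -opprD E0 subrr.
by case/H => /eqP; rewrite subr_eq0 => /eqP -> /eqP; rewrite subr_eq0 => /eqP ->.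
Qed.
Lemma free2_notin_line a b : free2 a b -> ~ line a b.
Proof.
move=> H [c hb]; have := H c (-1); rewrite scaleN1r hb subrr.
by case=> // _ /eqP; rewrite oppr_eq0 oner_eq0.
Qed.
Lemma notin_line_free2 a b : a != 0 -> ~ line a b -> free2 a b.
Proof.
move=> ha hl c d H; have [d0|dn0] := eqVneq d 0.
  split=> //; move: H; rewrite d0 scale0r addr0 => H.
  by apply/eqP/negPn/negP => cn0; move/eqP: ha; apply; apply: (scaler_nz_eq0 cn0).
exfalso; apply: hl; exists (- (d^-1 * c)).
have hdb : d *: b = - (c *: a) by apply/eqP; rewrite -addr_eq0 addrC H.
by rewrite -[b]scale1r -(mulVr_nz dn0) -scalerA hdb scalerN scalerA scaleNr.
Qed.
Lemma not_free2_line a b : a != 0 -> ~ free2 a b -> line a b.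
Proof.
move=> ha hn; case: (classic (line a b)) => // hl.
by case: hn; apply: notin_line_free2.
Qed.
Lemma free2_linel a b x : free2 a b -> line a x -> x != 0 -> free2 x b.
Proof.
move=> H [k ->] hx; have kn0 : k != 0 by apply: contraNneq hx => ->; rewrite scale0r.
by move=> c d; rewrite scalerA => /H [/(mulr_nz_eq0 kn0) -> ->].
Qed.
Lemma free2_proportional a b a' b' :
  proportional a a' -> proportional b b' -> free2 a b -> free2 a' b'.
Proof.
case=> l hl -> [m hm ->] H c d; rewrite !scalerA => /H [].
by move=> /(mulr_nz_eq0 hl) -> /(mulr_nz_eq0 hm) ->.
Qed.
Lemma free2_line_meet a b x : free2 a b -> line a x -> line b x -> x = 0.
Proof.
move=> H [c hx] [d hx']; have : c *: a + (- d) *: b = 0 by rewrite scaleNr -hx -hx' subrr.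
by case/H => c0 _; rewrite hx c0 scale0r.
Qed.
Lemma not_free2_self a : ~ free2 a a.
Proof.
move=> H; have := H 1 (-1); rewrite scaleN1r scale1r subrr.
by case=> // /eqP; rewrite oner_eq0.
Qed.
Lemma free2_addr a b : free2 a b -> free2 a (a + b) /\ free2 b (a + b).
Proof.
move=> H; split=> c d.
  rewrite scalerDr addrA -scalerDl => /H [] hcd hd; split=> //.
  by move: hcd; rewrite hd addr0.
rewrite scalerDr addrCA -scalerDl => /H [] hd hcd; split=> //.
by move: hcd; rewrite hd addr0.
Qed.
Lemma free2_addl a b : free2 a b -> free2 (a + b) b.
Proof.
move=> H c d; rewrite scalerDr -addrA -scalerDl => /H [] -> /eqP.
by rewrite add0r => /eqP ->.
Qed.

Lemma free3_coef a b c (x y z x' y' z' : K) : free3 a b c ->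
  x *: a + y *: b + z *: c = x' *: a + y' *: b + z' *: c -> [/\ x = x', y = y' & z = z'].
Proof.
move=> H E0; have : (x - x') *: a + (y - y') *: b + (z - z') *: c = 0.
  by rewrite !scalerBl (addrACA (x *: a)) -opprD (addrACA (x *: a + y *: b)) -opprD E0 subrr.
by case/H => /eqP; rewrite subr_eq0 => /eqP -> /eqP; rewrite subr_eq0 => /eqP ->
   /eqP; rewrite subr_eq0 => /eqP ->.
Qed.
Lemma free3_12 a b c : free3 a b c -> free2 a b.
Proof. by move=> H x y E0; have [] := H x y 0; rewrite ?scale0r ?addr0. Qed.
Lemma free3_213 a b c : free3 a b c -> free3 b a c.
Proof. by move=> H x y z; rewrite [x *: b + _]addrC => /H []. Qed.
Lemma free3_132 a b c : free3 a b c -> free3 a c b.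
Proof. by move=> H x y z; rewrite -addrA [y *: c + _]addrC addrA => /H []. Qed.
Lemma free3_23 a b c : free3 a b c -> free2 b c.
Proof. by move/free3_213/free3_132/free3_12. Qed.
Lemma free3_13 a b c : free3 a b c -> free2 a c.
Proof. by move/free3_132/free3_12. Qed.
Lemma free3_1_23 a b c : free3 a b c -> free2 a (b + c).
Proof. by move=> H d e; rewrite scalerDr addrA => /H [] -> ->. Qed.
Lemma free3_12_3 a b c : free3 a b c -> free2 (a + b) c.
Proof. by move=> H d e; rewrite scalerDr => /H [] -> _ ->. Qed.
Lemma free3_proportional a b c a' b' c' :
  proportional a a' -> proportional b b' -> proportional c c' ->
  free3 a b c -> free3 a' b' c'.
Proof.
case=> l hl -> [m hm ->] [n hn ->] H x y z; rewrite !scalerA => /H [].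
by move=> /(mulr_nz_eq0 hl) -> /(mulr_nz_eq0 hm) -> /(mulr_nz_eq0 hn) ->.
Qed.
Lemma free3_notin_span2 a b c : free3 a b c -> ~ span2 a b c.
Proof.
move=> H [x [y hc]]; have := H x y (-1); rewrite scaleN1r -hc subrr.
by case=> // _ _ /eqP; rewrite oppr_eq0 oner_eq0.
Qed.
Lemma notin_span2_free3 a b c : free2 a b -> ~ span2 a b c -> free3 a b c.
Proof.
move=> H hs x y z E0; have [z0|zn0] := eqVneq z 0.
  by move: E0; rewrite z0 scale0r addr0 => /H [-> ->].
exfalso; apply: hs; exists (- (z^-1 * x)), (- (z^-1 * y)).
have hzc : z *: c = - (x *: a + y *: b) by apply/eqP; rewrite -addr_eq0 addrC E0.
by rewrite -[c]scale1r -(mulVr_nz zn0) -scalerA hzc scalerN scalerDr !scalerA !scaleNr opprD.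
Qed.

Lemma span2_meet_sum3 a b c v : free3 a b c -> span2 (a + b) c v -> span2 (a + c) b v ->
  line (a + b + c) v.
Proof.
move=> H [al [be ->]] [ga [de E0]]; exists al.
have E1 : ga *: (a + c) + de *: b = ga *: a + de *: b + ga *: c.
  by rewrite scalerDr addrAC.
move: E0; rewrite E1 scalerDr => /(free3_coef H) [] h1 h2 h3.
by rewrite h3 -h1 !scalerDr.
Qed.
Lemma span2_meet_sum2 a b c v : free3 a b c -> span2 (a + b + c) a v -> span2 b c v ->
  line (b + c) v.
Proof.
move=> H [al [be ->]] [ga [de E0]]; exists al.
have E1 : al *: (a + b + c) + be *: a = (al + be) *: a + al *: b + al *: c.
  by rewrite !scalerDr scalerDl addrAC (addrAC (al *: a)).
have E2 : ga *: b + de *: c = 0 *: a + ga *: b + de *: c by rewrite scale0r add0r.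
move: E0; rewrite E1 E2 => /(free3_coef H) [] h1 h2 h3.
by rewrite h1 scale0r add0r scalerDr.
Qed.

Lemma span2_exchange a b x (al be : K) : al != 0 -> x = al *: a + be *: b -> span2 x b a.
Proof.
move=> han hx; exists al^-1, (- (al^-1 * be)).
by rewrite hx scalerDr !scalerA mulVr_nz // scale1r scaleNr addrK.
Qed.
Lemma span2_no_free3 a b x y z :
  free3 x y z -> span2 a b x -> span2 a b y -> span2 a b z -> False.
Proof.
move=> H; suff exchange a' b' (al be : K) : al != 0 -> x = al *: a' + be *: b' ->
    span2 a' b' y -> span2 a' b' z -> False.
  case=> al [be hx] hy hz; have [al0|aln0] := eqVneq al 0; last exact: (exchange a b al be aln0 hx).
  have [be0|ben0] := eqVneq be 0.
    by move/free3_12/free2_neq0l: H; rewrite hx al0 be0 !scale0r addr0 eqxx.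
  by apply: (exchange b a be al ben0); [rewrite addrC | apply: span2_sym..].
move=> han hx hy hz.
have sub_x : forall v, span2 a' b' v -> span2 x b' v.
  by move=> v; apply: span2_sub; [apply: span2_exchange hx | apply: span2_r].
have [ga [de hy']] := sub_x _ hy.
have [de0|den0] := eqVneq de 0.
  apply: (free2_notin_line (free3_12 H)); exists ga.
  by rewrite hy' de0 scale0r addr0.
have hb : span2 y x b' by apply: (span2_exchange den0); rewrite hy' addrC.
apply: (free3_notin_span2 H); apply: (span2_sub (span2_l x y) _ (sub_x _ hz)).
exact: span2_sym.
Qed.

Lemma no_free3_span2 (T : Type) (h : T -> E) :
  ~ (exists p q r, free3 (h p) (h q) (h r)) -> exists a b, forall t, span2 a b (h t).
Proof.
move=> N; case: (classic (exists p, h p != 0)) => [[p hp]|n0]; last first.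
  exists 0, 0 => t; have -> : h t = 0 by apply: NNPP => ht; apply: n0; exists t; apply/eqP.
  by exists 0, 0; rewrite scale0r addr0.
case: (classic (exists q, ~ line (h p) (h q))) => [[q hq]|n1]; last first.
  by exists (h p), (h p) => t; apply: line_sub_span2; apply: NNPP => hl; apply: n1; exists t.
case: (classic (exists r, ~ span2 (h p) (h q) (h r))) => [[r hr]|n2]; last first.
  by exists (h p), (h q) => t; apply: NNPP => hs; apply: n2; exists t.
by case: N; exists p, q, r; apply: notin_span2_free3 (notin_line_free2 hp hq) hr.
Qed.

End DivisionRingLinearAlgebra.

Lemma pairwise_free2_avoid (K : unitRingType) (E : lmodType K) (a b c u w : E) :
  free2 a b -> free2 a c -> free2 b c -> w != 0 ->
  [\/ ~ line a w /\ (u = 0 \/ ~ line a u), ~ line b w /\ (u = 0 \/ ~ line b u)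
    | ~ line c w /\ (u = 0 \/ ~ line c u)].
Proof.
move=> hab hac hbc hw.
have miss y y' v : free2 y y' -> v != 0 -> line y v -> ~ line y' v.
  by move=> hyy' hv hy hy'; move/eqP: hv; apply; apply: free2_line_meet hyy' hy hy'.
have [u0|hu] := eqVneq u 0.
  have [aw|naw] := classic (line a w); last by apply: Or31; split=> //; left.
  by apply: Or32; split; [exact: miss hab hw aw | left].
have [aw|naw] := classic (line a w).
  have [bu|nbu] := classic (line b u).
    by apply: Or33; split; [exact: miss hac hw aw | right; exact: miss hbc hu bu].
  by apply: Or32; split; [exact: miss hab hw aw | right].
have [au|nau] := classic (line a u); last by apply: Or31; split=> //; right.
have [bw|nbw] := classic (line b w).
  by apply: Or33; split; [exact: miss hbc hw bw | right; exact: miss hac hu au].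
by apply: Or32; split=> //; right; exact: miss hab hu au.
Qed.

Lemma rmorphism_of (K1 K2 : unitRingType) (s : K1 -> K2)
    (sD : forall x y, s (x + y) = s x + s y) (s1 : s 1 = 1)
    (sM : forall x y, s (x * y) = s x * s y) :
  exists sigma : {rmorphism K1 -> K2}, forall x, sigma x = s x.
Proof.
have s0 : s 0 = 0 by apply: (addrI (s 0)); rewrite -sD !addr0.
pose sigma : {rmorphism K1 -> K2} := HB.pack s
  (GRing.isNmodMorphism.Build K1 K2 s (s0, sD))
  (GRing.isMonoidMorphism.Build K1 K2 s (s1, sM)).
by exists sigma.
Qed.

Section SemilinearLift.
Variables (K1 K2 : unitRingType) (E1 : lmodType K1) (E2 : lmodType K2).
Hypothesis hK2 : division_ring K2.
Variable h : E1 -> E2.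
Hypothesis h_span : forall (u w : E1) (a c : K1), span2 (h u) (h w) (h (a *: u + c *: w)).
Variables p q r : E1.
Hypothesis h_free3 : free3 (h p) (h q) (h r).

Lemma h_scale (u : E1) (a : K1) : line (h u) (h (a *: u)).
Proof.
have := h_span u u a 0; rewrite scale0r addr0.
exact: span2_sub_line (line_self _) (line_self _).
Qed.
Lemma h_add (u w : E1) : span2 (h u) (h w) (h (u + w)).
Proof. by have := h_span u w 1 1; rewrite !scale1r. Qed.
Lemma h_sub (u w : E1) : span2 (h u) (h w) (h (u - w)).
Proof. by have := h_span u w 1 (-1); rewrite scale1r scaleN1r. Qed.
Lemma h_add_kernel (u x : E1) : h x = 0 -> proportional (h u) (h (u + x)).
Proof.
move=> hx; apply: lines_proportional.
  by apply: span2_sub_line (line_self _) _ (h_add u x); rewrite hx; apply: line0.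
have := h_sub (u + x) x; rewrite addrK.
by apply: span2_sub_line (line_self _) _; rewrite hx; apply: line0.
Qed.
Lemma h_out_of_span2 (a b : E2) : exists x, ~ span2 a b (h x).
Proof.
apply: NNPP => N; apply: (span2_no_free3 hK2 h_free3);
  by apply: NNPP => hn; apply: N; eexists; exact: hn.
Qed.
Lemma h_free2_with (a : E2) : a != 0 -> exists x, free2 a (h x).
Proof.
move=> ha; have [x hx] := h_out_of_span2 a a; exists x.
by apply: (notin_line_free2 hK2 ha) => hl; apply: hx; apply: line_sub_span2.
Qed.

Definition transverse (y x : E1) := h x = 0 \/ free2 (h y) (h x).
Definition adapted (y : E1) (y' : E2) (x : E1) (x' : E2) :=
  proportional (h x) x' /\ proportional (h (y + x)) (y' + x').

Lemma not_transverse y x : h y != 0 -> ~ transverse y x -> h x != 0 /\ line (h y) (h x).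
Proof.
move=> hy hn; have hx : h x != 0 by apply/eqP => hx; apply: hn; left.
by split=> //; apply: (not_free2_line hK2 hy) => hi; apply: hn; right.
Qed.

Lemma adapted_kernel y y' x : proportional (h y) y' -> h x = 0 -> adapted y y' x 0.
Proof.
move=> hy hx; split; first by rewrite hx; apply: proportional_refl.
by rewrite addr0; apply: (proportional_trans hK2 (proportional_sym hK2 (h_add_kernel y hx))).
Qed.

Lemma adapted_exists y y' x :
  proportional (h y) y' -> transverse y x -> exists x', adapted y y' x x'.
Proof.
move=> hy [hx|Hi]; first by exists 0; apply: adapted_kernel.
have hy' : line y' (h y) := proportional_in_line_sym hK2 hy.
have [al [be E0]] : span2 y' (h x) (h (y + x)).
  exact: span2_of_lines hy' (line_self _) (h_add y x).
have aln0 : al != 0.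
  apply/eqP => al0; apply: (free2_notin_line (free2_sym Hi)).
  have := h_sub (y + x) x; rewrite addrK; apply: span2_sub_line (line_self _).
  by rewrite E0 al0 scale0r add0r; exists be.
have ben0 : be != 0.
  apply/eqP => be0; apply: (free2_notin_line Hi).
  apply: (line_proportional hK2 (proportional_sym hK2 hy)).
  have := h_sub (y + x) y; rewrite addrAC subrr add0r; apply: span2_sub_line _ hy'.
  by rewrite E0 be0 scale0r addr0; exists al.
exists ((al^-1 * be) *: h x); split.
  by apply: proportional_scale; apply: (mulr_nz hK2 (invr_neq0 aln0) ben0).
exists al^-1; first exact: invr_neq0.
by rewrite E0 scalerDr !scalerA (mulVr_nz hK2 aln0) scale1r.
Qed.

Lemma adapted_unique y y' x x1 x2 : proportional (h y) y' -> transverse y x ->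
  adapted y y' x x1 -> adapted y y' x x2 -> x1 = x2.
Proof.
move=> hy [hx|Hi] [s1 t1] [s2 t2].
  by rewrite hx in s1 s2; rewrite (proportional0 s1) (proportional0 s2).
case: s1 t1 => m1 _ -> t1; case: s2 t2 => m2 _ -> t2.
case: hy t1 t2 => l hl -> t1 t2.
have [k _] := proportional_trans hK2 (proportional_sym hK2 t2) t1.
rewrite scalerDr !scalerA => /(free2_coef Hi) [el em].
have k1 : k = 1 by rewrite -[k]mulr1 -(mulrV_nz hK2 hl) mulrA -el mulrV_nz.
by rewrite em k1 mul1r.
Qed.

Lemma adapted_sym y y' x x' : adapted y y' x x' -> proportional (h y) y' -> adapted x x' y y'.
Proof. by move=> [hx hxy] hy; split=> //; rewrite addrC [x' + _]addrC. Qed.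

(* h (y + z + x) lies in the planes <y' + z', x'> and <y' + x', z'>, hence on
   the line of y' + z' + x'; then h (z + x) lies in the planes
   <y' + z' + x', y'> and <z', x'>, hence on the line of z' + x'. *)
Lemma adapted_triangle y y' z z' x x' :
  proportional (h y) y' -> free3 (h y) (h z) (h x) ->
  adapted y y' z z' -> adapted y y' x x' -> adapted z z' x x'.
Proof.
move=> sy H [sz szz] [sx sxx]; split => //.
have H' : free3 y' z' x' := free3_proportional hK2 sy sz sx H.
have [ly lz lx] := And3 (proportional_in_line_sym hK2 sy)
  (proportional_in_line_sym hK2 sz) (proportional_in_line_sym hK2 sx).
have hw1 : span2 (y' + z') x' (h (y + z + x)).
  exact: span2_of_lines (proportional_in_line_sym hK2 szz) lx (h_add _ _).
have hw2 : span2 (y' + x') z' (h (y + z + x)).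
  by rewrite addrAC; apply: span2_of_lines (proportional_in_line_sym hK2 sxx) lz (h_add _ _).
have hzx1 : span2 (y' + z' + x') y' (h (z + x)).
  have -> : z + x = y + z + x - y by rewrite addrAC (addrAC y) subrr add0r.
  exact: span2_of_lines (span2_meet_sum3 H' hw1 hw2) ly (h_sub _ _).
have hzx2 : span2 z' x' (h (z + x)) by apply: span2_of_lines lz lx (h_add z x).
have hzx0 : h (z + x) != 0.
  apply/eqP => hzx; apply: (free2_notin_line (free2_sym (free3_23 H))).
  have := h_sub (z + x) x; rewrite addrK; apply: span2_sub_line (line_self _).
  by rewrite hzx; apply: line0.
exact: (line_nz_proportional hK2 (span2_meet_sum2 H' hzx1 hzx2) hzx0).
Qed.

(* When h x lies in the plane of h y and h z, pass through a third vector
   r outside that plane. *)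
Lemma adapted_transfer y y' z z' x x' :
  proportional (h y) y' -> free2 (h y) (h z) -> adapted y y' z z' ->
  transverse y x -> transverse z x -> adapted y y' x x' -> adapted z z' x x'.
Proof.
move=> sy Hyz Rz Cy Cz Rx.
have [hx0|hxn0] := eqVneq (h x) 0.
  have -> : x' = 0 by case: Rx => s _; rewrite hx0 in s; apply: proportional0 s.
  by apply: adapted_kernel => //; case: Rz.
have Hyx : free2 (h y) (h x) by case: Cy => // /eqP; rewrite (negbTE hxn0).
have Hzx : free2 (h z) (h x) by case: Cz => // /eqP; rewrite (negbTE hxn0).
case: (classic (span2 (h y) (h z) (h x))) => hin; last first.
  exact: (adapted_triangle sy (notin_span2_free3 hK2 Hyz hin) Rz Rx).
have [r0 hr0] := h_out_of_span2 (h y) (h z).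
have Hyzr : free3 (h y) (h z) (h r0) := notin_span2_free3 hK2 Hyz hr0.
have [r' Rr] := adapted_exists sy (or_intror (free3_13 Hyzr)).
have Hyxr : free3 (h y) (h x) (h r0).
  apply: (notin_span2_free3 hK2 Hyx) => hs; apply: hr0.
  exact: span2_sub (span2_l _ _) hin hs.
have Hrzx : free3 (h r0) (h z) (h x).
  apply: free3_213; apply: free3_132; apply: (notin_span2_free3 hK2 Hzx) => hs; apply: hr0.
  exact: span2_sub (span2_r _ _) hin hs.
have Rzr : adapted z z' r0 r' := adapted_triangle sy Hyzr Rz Rr.
have Rrx : adapted r0 r' x x' := adapted_triangle sy (free3_132 Hyxr) Rr Rx.
exact: adapted_triangle Rr.1 Hrzx (adapted_sym Rzr Rz.1) Rrx.
Qed.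

Definition adapt (y : E1) (y' : E2) (x : E1) : E2 :=
  epsilon (inhabits 0) (adapted y y' x).
Lemma adapt_spec y y' x :
  proportional (h y) y' -> transverse y x -> adapted y y' x (adapt y y' x).
Proof. by move=> hy hc; apply: epsilon_spec; apply: adapted_exists. Qed.

Definition fq := adapt p (h p) q.
Definition f (x : E1) : E2 :=
  if excluded_middle_informative (transverse p x) then adapt p (h p) x else adapt q fq x.

Lemma free2_pq : free2 (h p) (h q).
Proof. exact: free3_12 h_free3. Qed.
Lemma hp_neq0 : h p != 0.
Proof. exact: free2_neq0l free2_pq. Qed.
Lemma transverse_pq : transverse p q.
Proof. by right; apply: free2_pq. Qed.
Lemma adapted_pq : adapted p (h p) q fq.
Proof. exact: adapt_spec (proportional_refl _) transverse_pq. Qed.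
Lemma transverse_q x : ~ transverse p x -> transverse q x.
Proof.
move=> /(not_transverse hp_neq0) [hx hl]; right; apply: free2_sym.
exact: (free2_linel hK2 free2_pq hl hx).
Qed.
Lemma f_transverse x : transverse p x -> f x = adapt p (h p) x.
Proof. by rewrite /f; case: excluded_middle_informative. Qed.
Lemma f_not_transverse x : ~ transverse p x -> f x = adapt q fq x.
Proof. by rewrite /f; case: excluded_middle_informative. Qed.

Lemma f_proportional x : proportional (h x) (f x).
Proof.
case: (classic (transverse p x)) => hc.
  by rewrite f_transverse //; case: (adapt_spec (proportional_refl (h p)) hc).
by rewrite f_not_transverse //; case: (adapt_spec adapted_pq.1 (transverse_q hc)).
Qed.
Lemma f_p : f p = h p.
Proof.
have transverse_qp : transverse q p by right; apply: free2_sym free2_pq.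
have not_transverse_pp : ~ transverse p p.
  by case=> [/eqP|]; [rewrite (negbTE hp_neq0) | apply: not_free2_self].
rewrite f_not_transverse //; apply: (adapted_unique adapted_pq.1 transverse_qp).
  exact: adapt_spec adapted_pq.1 transverse_qp.
exact: adapted_sym adapted_pq (proportional_refl _).
Qed.
Lemma f_q : f q = fq.
Proof. by rewrite f_transverse //; apply: transverse_pq. Qed.

Definition f_adapted_at y := forall x, transverse y x -> adapted y (f y) x (f x).

Lemma f_adapted_p : f_adapted_at p.
Proof. by move=> x Cx; rewrite f_p f_transverse //; apply: adapt_spec (proportional_refl _) Cx. Qed.
Lemma f_adapted_q : f_adapted_at q.
Proof.
move=> x Cqx; rewrite f_q; case: (classic (transverse p x)) => Cpx.
  rewrite f_transverse //; apply: (adapted_transfer (proportional_refl _) free2_pq) => //.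
    exact: adapted_pq.
  exact: adapt_spec (proportional_refl _) Cpx.
by rewrite f_not_transverse //; apply: adapt_spec adapted_pq.1 Cqx.
Qed.
Lemma f_adapted_step y z x : f_adapted_at y -> free2 (h y) (h z) ->
  transverse y x -> transverse z x -> adapted z (f z) x (f x).
Proof.
move=> Hy Hyz Cyx Czx.
exact: (adapted_transfer (f_proportional y) Hyz (Hy z (or_intror Hyz)) Cyx Czx (Hy x Cyx)).
Qed.

Lemma free2_pq_sum : free2 (h p) (h (p + q)) /\ free2 (h q) (h (p + q)).
Proof.
have [spq q_pq] : proportional (h (p + q)) (h p + fq) /\ proportional (h q) fq.
  by case: adapted_pq.
have [I1 I2] := free2_addr (free2_proportional hK2 (proportional_refl _) q_pq free2_pq).
split; first exact: (free2_proportional hK2 (proportional_refl _) (proportional_sym hK2 spq) I1).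
exact: (free2_proportional hK2 (proportional_sym hK2 q_pq) (proportional_sym hK2 spq) I2).
Qed.
Lemma f_adapted_pq : f_adapted_at (p + q).
Proof.
move=> x Cx; case: (classic (transverse p x)) => Cpx.
  exact: (f_adapted_step f_adapted_p free2_pq_sum.1 Cpx Cx).
exact: (f_adapted_step f_adapted_q free2_pq_sum.2 (transverse_q Cpx) Cx).
Qed.

(* Each nonzero vector lies on at most one of the three lines h p, h q and
   h (p + q), so one of them is transverse to both z and x. *)
Lemma f_adapted z x : h z != 0 -> transverse z x -> adapted z (f z) x (f x).
Proof.
move=> hz Cx; have [hp_pq hq_pq] := free2_pq_sum.
have free_of y : h y != 0 -> ~ line (h y) (h z) -> free2 (h y) (h z).
  by move=> hy; apply: (notin_line_free2 hK2 hy).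
have transverse_of y : h y != 0 -> h x = 0 \/ ~ line (h y) (h x) -> transverse y x.
  by move=> hy [|n]; [left | right; apply: (notin_line_free2 hK2 hy n)].
have [[nz nx]|[nz nx]|[nz nx]] := pairwise_free2_avoid (h x) free2_pq hp_pq hq_pq hz.
- have hy := hp_neq0.
  exact: f_adapted_step f_adapted_p (free_of _ hy nz) (transverse_of _ hy nx) Cx.
- have hy := free2_neq0r free2_pq.
  exact: f_adapted_step f_adapted_q (free_of _ hy nz) (transverse_of _ hy nx) Cx.
- have hy := free2_neq0r hp_pq.
  exact: f_adapted_step f_adapted_pq (free_of _ hy nz) (transverse_of _ hy nx) Cx.
Qed.

Lemma f_kernel v : h v = 0 -> f v = 0.
Proof. by move=> hv; have := f_proportional v; rewrite hv => /proportional0. Qed.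
Lemma f_neq0 v : h v != 0 -> f v != 0.
Proof. exact: (proportional_neq0 hK2 (f_proportional v)). Qed.
Lemma f_proportional_of v w : proportional (h v) w -> proportional w (f v).
Proof.
by move=> /(proportional_sym hK2) s; apply: (proportional_trans hK2 s (f_proportional v)).
Qed.
Lemma f_line v w : line (h v) (h w) -> line (f v) (f w).
Proof.
move=> hl; apply: line_proportionalr _ (f_proportional w).
exact: (line_proportional hK2 (f_proportional v) hl).
Qed.
Lemma f_free2 x y : free2 (h x) (h y) -> free2 (f x) (f y).
Proof. exact: (free2_proportional hK2 (f_proportional x) (f_proportional y)). Qed.
Lemma h_free2 x y u v : proportional (h x) u -> proportional (h y) v -> free2 u v ->
  free2 (h x) (h y).
Proof.
move=> /(proportional_sym hK2) hu /(proportional_sym hK2) hv.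
exact: (free2_proportional hK2 hu hv).
Qed.

(* Both sides of f (z + (x + y)) = f ((z + x) + y) are expanded on the free
   triple f z, f x, f y; comparing coefficients forces the factor to be 1. *)
Lemma f_add_free x y : free2 (h x) (h y) -> f (x + y) = f x + f y.
Proof.
move=> Hxy; have [z hz] := h_out_of_span2 (h x) (h y).
have Hzxy : free3 (h z) (h x) (h y) := free3_213 (free3_132 (notin_span2_free3 hK2 Hxy hz)).
have F : free3 (f z) (f x) (f y).
  exact: (free3_proportional hK2 (f_proportional z) (f_proportional x) (f_proportional y) Hzxy).
have hz0 : h z != 0 := free2_neq0l (free3_12 Hzxy).
have [_ Mxy] := f_adapted (free2_neq0l Hxy) (or_intror Hxy).
have [al _ e_xy] := f_proportional_of Mxy.
have [_ Mzx] := f_adapted hz0 (or_intror (free3_12 Hzxy)).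
have [be _ e_zx] := f_proportional_of Mzx.
have Cz : transverse z (x + y) by right; apply: h_free2 (f_proportional z) Mxy (free3_1_23 F).
have [_ M1] := f_adapted hz0 Cz.
have Izx : free2 (h (z + x)) (h y) := h_free2 Mzx (f_proportional y) (free3_12_3 F).
have [_ M2] := f_adapted (free2_neq0l Izx) (or_intror Izx); rewrite -addrA in M2.
have [nu hnu E] := proportional_trans hK2 (proportional_sym hK2 M1) M2.
move: E; rewrite e_xy e_zx !scalerDr !scalerA addrA -[f y in X in X = _]scale1r.
move=> /(free3_coef F) [be_nu be_nual _].
have -> : al = 1 by apply: (mulrI (hK2 hnu)); rewrite mulr1 -be_nual be_nu.
by rewrite !scale1r.
Qed.

Lemma f_add_dep x y : h x != 0 -> h y != 0 -> ~ free2 (h x) (h y) ->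
  f (x + y) = f x + f y.
Proof.
move=> hx hy n; have hxy : line (h x) (h y) := not_free2_line hK2 hx n.
have [z Ixz] := h_free2_with hx.
have ezx : f (z + x) = f z + f x := f_add_free (free2_sym Ixz).
have [t ht ety] := proportional_sym hK2 (line_nz_proportional hK2 (f_line hxy) (f_neq0 hy)).
have I2 : free2 (f z) (f x) := f_free2 (free2_sym Ixz).
have lxy : line (h x) (h (x + y)) := span2_sub_line (line_self _) hxy (h_add x y).
have Cz : transverse z (x + y).
  have [e|ne] := eqVneq (h (x + y)) 0; first by left.
  by right; apply: free2_sym (free2_linel hK2 Ixz lxy ne).
have [_ M1] := f_adapted (free2_neq0r Ixz) Cz.
have Izx : free2 (h (z + x)) (h y).
  apply: h_free2 (f_proportional (z + x)) (f_proportional y) _.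
  rewrite ezx ety.
  exact: (free2_proportional hK2 (proportional_refl _) (proportional_scale _ ht) (free2_addl I2)).
have [_ M2] := f_adapted (free2_neq0l Izx) (or_intror Izx); rewrite -addrA in M2.
have [nu _ e3] := proportional_trans hK2 (proportional_sym hK2 M1) M2.
have [mu emu] := f_line lxy.
have E : 1 *: f z + (1 + t) *: f x = nu *: f z + (nu * mu) *: f x.
  by rewrite scale1r scalerDl scale1r addrA -ety -ezx e3 emu scalerDr scalerA.
have [h1 h2] := free2_coef I2 E.
by rewrite emu ety -h1 mul1r in h2 *; rewrite -h2 scalerDl scale1r.
Qed.

Lemma f_add_kernel x y : h x = 0 -> f (x + y) = f y.
Proof.
move=> hx; have shxy : proportional (h y) (h (x + y)) by rewrite addrC; apply: h_add_kernel.
have [hy|hy] := eqVneq (h y) 0.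
  by rewrite (f_kernel hy) f_kernel //; apply: proportional0; rewrite -hy.
have [z Iyz] := h_free2_with hy.
have [_ M1] := f_adapted (free2_neq0r Iyz) (or_intror (free2_sym Iyz)).
have Cz : transverse z (x + y).
  by right; apply: (free2_proportional hK2 (proportional_refl _) shxy (free2_sym Iyz)).
have [_ M2] := f_adapted (free2_neq0r Iyz) Cz.
have s3 : proportional (h (z + y)) (h (z + (x + y))).
  by have := h_add_kernel (z + y) hx; rewrite -addrA (addrC y).
have [nu _ e] := proportional_trans hK2 (proportional_trans hK2 (proportional_sym hK2 M1) s3) M2.
have [mu emu] := f_line (proportional_in_line shxy).
have E : 1 *: f z + mu *: f y = nu *: f z + nu *: f y by rewrite scale1r -emu e scalerDr.
have [h1 h2] := free2_coef (f_free2 (free2_sym Iyz)) E.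
by rewrite emu h2 -h1 scale1r.
Qed.

Lemma f_add x y : f (x + y) = f x + f y.
Proof.
have [hx|hx] := eqVneq (h x) 0; first by rewrite f_add_kernel // (f_kernel hx) add0r.
have [hy|hy] := eqVneq (h y) 0; first by rewrite addrC f_add_kernel // (f_kernel hy) addr0.
by case: (classic (free2 (h x) (h y))) => I; [apply: f_add_free | apply: f_add_dep].
Qed.

Lemma f_scale_ex v a : exists c, f (a *: v) = c *: f v.
Proof. by have [c e] := f_line (h_scale v a); exists c. Qed.
Lemma scale_factor_eq u v a c d : free2 (h u) (h v) ->
  f (a *: u) = c *: f u -> f (a *: v) = d *: f v -> c = d.
Proof.
move=> I eu ev; have [e ee] := f_scale_ex (u + v) a.
have E : c *: f u + d *: f v = e *: f u + e *: f v.
  by rewrite -eu -ev -f_add -scalerDr ee f_add scalerDr.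
by have [-> ->] := free2_coef (f_free2 I) E.
Qed.
Lemma scale_factor_uniform v a c : f (a *: p) = c *: f p -> f (a *: v) = c *: f v.
Proof.
move=> H; have [hv|hv] := eqVneq (h v) 0.
  have := h_scale v a; rewrite hv => -[k]; rewrite scaler0 => ek.
  by rewrite (f_kernel ek) (f_kernel hv) scaler0.
have [d ed] := f_scale_ex v a; rewrite ed; congr (_ *: _).
case: (classic (free2 (h p) (h v))) => I; first exact: esym (scale_factor_eq I H ed).
have [z Ipz] := h_free2_with hp_neq0.
have Izv : free2 (h z) (h v).
  exact: free2_sym (free2_linel hK2 Ipz (not_free2_line hK2 hp_neq0 I) hv).
have [e ez] := f_scale_ex z a.
by rewrite (scale_factor_eq Ipz H ez) (scale_factor_eq Izv ez ed).
Qed.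

Definition sigma (a : K1) : K2 := epsilon (inhabits 0) (fun c => f (a *: p) = c *: f p).

Lemma f_scale v a : f (a *: v) = sigma a *: f v.
Proof.
apply: scale_factor_uniform.
by apply: (epsilon_spec (inhabits 0) (fun c => f (a *: p) = c *: f p)); apply: f_scale_ex.
Qed.

Lemma sigmaD a b : sigma (a + b) = sigma a + sigma b.
Proof.
apply: (scalerIr_nz hK2 (f_neq0 hp_neq0)).
by rewrite scalerDl -!f_scale -f_add scalerDl.
Qed.
Lemma sigma1 : sigma 1 = 1.
Proof. by apply: (scalerIr_nz hK2 (f_neq0 hp_neq0)); rewrite -f_scale !scale1r. Qed.
Lemma sigmaM a b : sigma (a * b) = sigma a * sigma b.
Proof.
apply: (scalerIr_nz hK2 (f_neq0 hp_neq0)).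
by rewrite -f_scale -(scalerA a b p) !f_scale scalerA.
Qed.

Lemma semilinear_lift :
  exists F : E1 -> E2, semilinear_map F /\ forall v, proportional (h v) (F v).
Proof.
exists f; split; last exact: f_proportional.
split; first exact: f_add.
have [s hs] := rmorphism_of sigmaD sigma1 sigmaM.
by exists s => a v; rewrite hs f_scale.
Qed.

End SemilinearLift.

Section DualPair.
Variables (K : unitRingType) (E : lmodType K) (F : lmodType K^c) (b : E -> F -> K).
Hypothesis hK : division_ring K.
Hypothesis hb : dual_pair b.

Lemma bDl x1 x2 y : b (x1 + x2) y = b x1 y + b x2 y.
Proof. by case: hb => [[H _ _ _] _]. Qed.
Lemma bDr x y1 y2 : b x (y1 + y2) = b x y1 + b x y2.
Proof. by case: hb => [[_ H _ _] _]. Qed.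
Lemma bZl (a : K) x y : b (a *: x) y = a * b x y.
Proof. by case: hb => [[_ _ H _] _]. Qed.
Lemma bZr (a : K) x (y : F) : b x ((a : K^c) *: y) = b x y * a.
Proof. by case: hb => [[_ _ _ H] _]. Qed.
Lemma b_nondeg x : (forall y, b x y = 0) -> x = 0.
Proof. by case: hb => [_ [H _]]; apply: H. Qed.
Lemma b0l y : b 0 y = 0.
Proof. by rewrite -(scale0r (0 : E)) bZl mul0r. Qed.
Lemma bBr x (y1 y2 : F) : b x (y1 - y2) = b x y1 - b x y2.
Proof. by rewrite bDr -scaleN1r bZr mulrN1. Qed.

Lemma perp2_sub (A : E -> Prop) x : A x -> perpF b (perpE b A) x.
Proof. by move=> Ax y hy; apply: hy. Qed.
Lemma perp2_mono (A B : E -> Prop) : subset_of A B ->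
  subset_of (perpF b (perpE b A)) (perpF b (perpE b B)).
Proof. by move=> H x hx y hy; apply: hx => z Az; apply: hy; apply: H. Qed.
Lemma perp2_ext (A B : E -> Prop) : (forall x, A x <-> B x) ->
  perpF b (perpE b A) = perpF b (perpE b B).
Proof. by move=> H; apply: pred_ext => x; split; apply: perp2_mono => z; case: (H z). Qed.
Lemma perp2_closed (A : E -> Prop) : is_closed b (perpF b (perpE b A)).
Proof.
apply: pred_ext => x; split; last exact: perp2_sub.
by move=> hx y hy; apply: hx => z hz; apply: hz.
Qed.

Lemma cjoin_closed (S : LF b -> Prop) : is_closed b (cjoin S).
Proof. exact: perp2_closed. Qed.
Lemma cjoin_eq (S : LF b -> Prop) (X : LF b) :
  (forall x, (exists2 A : LF b, S A & proj1_sig A x) <-> proj1_sig X x) ->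
  cjoin S = proj1_sig X.
Proof. by move=> H; rewrite /cjoin (perp2_ext H); apply: (proj2_sig X). Qed.
Lemma cjoin_empty (S : LF b -> Prop) : (forall A, ~ S A) -> cjoin S = zero_set (E:=E).
Proof.
move=> H; apply: pred_ext => x; split=> [hx|-> y _]; last exact: b0l.
by apply: b_nondeg => y; apply: hx => z [A /H].
Qed.

Lemma closed_perp2 (A : LF b) x : perpF b (perpE b (proj1_sig A)) x -> proj1_sig A x.
Proof. by rewrite (proj2_sig A). Qed.
Lemma closed0 (A : LF b) : proj1_sig A 0.
Proof. by apply: closed_perp2 => y _; apply: b0l. Qed.
Lemma closedZ (A : LF b) (c : K) x : proj1_sig A x -> proj1_sig A (c *: x).
Proof. by move=> hx; apply: closed_perp2 => z hz; rewrite bZl (hz _ hx) mulr0. Qed.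
Lemma closed_line (A : LF b) x : proj1_sig A x -> subset_of (line x) (proj1_sig A).
Proof. by move=> hx z [c ->]; apply: closedZ. Qed.
Lemma closed_span2 (A : LF b) x y : proj1_sig A x -> proj1_sig A y ->
  subset_of (span2 x y) (proj1_sig A).
Proof.
move=> hx hy z [c [d ->]]; apply: closed_perp2 => t ht.
by rewrite bDl !bZl (ht _ hx) (ht _ hy) !mulr0 addr0.
Qed.
Lemma closed_nonzero_elt (A : LF b) :
  proj1_sig A <> zero_set (E:=E) -> exists2 w, proj1_sig A w & w != 0.
Proof.
move=> hA; apply: NNPP => hn; apply: hA; apply: pred_ext => x.
split=> [hx|->]; last exact: closed0.
by apply: NNPP => hx0; apply: hn; exists x => //; apply/eqP.
Qed.

(* If some y0 in A^perp has b v y0 != 0, then x - (b x y0 / b v y0) v is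
   orthogonal to A^perp, hence lies in A; otherwise v itself lies in A. *)
Lemma perp2_add_line (A : E -> Prop) (v : E) :
  subset_of (perpF b (perpE b A)) A ->
  let Av := fun x => exists a c, A a /\ x = a + c *: v in
  subset_of (perpF b (perpE b Av)) Av.
Proof.
move=> hA Av x hx.
case: (classic (exists2 y0, perpE b A y0 & b v y0 != 0)) => [[y0 hy0 hk]|hn].
  set k := b v y0; set c := b x y0 * k^-1.
  exists (x - c *: v), c; split; last by rewrite subrK.
  apply: hA => y hy; set y' := y - ((k^-1 * b v y : K) : K^c) *: y0.
  have hy'Av : perpE b Av y'.
    move=> z [a [d [Aa ->]]].
    rewrite bDl bZl !bBr !bZr (hy _ Aa) (hy0 _ Aa) mul0r subrr add0r.
    by rewrite mulrA (mulrV (hK hk)) mul1r subrr mulr0.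
  have := hx _ hy'Av; rewrite bBr bZr => /eqP; rewrite subr_eq0 => /eqP e.
  by rewrite bDl -scaleNr bZl e /c mulrA mulNr subrr.
have hv y0 : perpE b A y0 -> b v y0 = 0.
  by move=> hy0; apply: NNPP => hne; apply: hn; exists y0 => //; apply/eqP.
exists x, 0; split; last by rewrite scale0r addr0.
apply: hA => y hy; apply: hx => z [a [c [Aa ->]]].
by rewrite bDl bZl (hy _ Aa) (hv _ hy) mulr0 addr0.
Qed.

Lemma line_closed (v : E) : is_closed b (line v).
Proof.
apply: pred_ext => x; split; last exact: perp2_sub.
have hzero : subset_of (perpF b (perpE b (zero_set (E:=E)))) (zero_set (E:=E)).
  by move=> z hz; apply: b_nondeg => y; apply: hz => t ->; apply: b0l.
rewrite (perp2_ext (B := fun x => exists a c, zero_set (E:=E) a /\ x = a + c *: v)).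
  by move/(perp2_add_line hzero) => [a [c [-> ->]]]; exists c; rewrite add0r.
move=> z; split; first by case=> c ->; exists 0, c; rewrite add0r.
by case=> a [c [-> ->]]; exists c; rewrite add0r.
Qed.

Lemma span2_closed (u w : E) : subset_of (perpF b (perpE b (span2 u w))) (span2 u w).
Proof.
have hu : subset_of (perpF b (perpE b (line u))) (line u) by move=> z; rewrite line_closed.
rewrite (perp2_ext (B := fun x => exists a c, line u a /\ x = a + c *: w)).
  by move=> x /(perp2_add_line hu) [a [c [[d ->] ->]]]; exists d, c.
move=> z; split; first by case=> c [d ->]; exists (c *: u), d; split=> //; exists c.
by case=> a [c [[d ->] ->]]; exists d, c.
Qed.

Lemma chain4_free3 (A0 A1 A2 A3 : LF b) :
  let s (A : LF b) := proj1_sig A in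
  [/\ subset_of (s A0) (s A1) /\ s A0 <> s A1,
      subset_of (s A1) (s A2) /\ s A1 <> s A2
    & subset_of (s A2) (s A3) /\ s A2 <> s A3] ->
  exists x1 x2 x3, [/\ s A3 x1, s A3 x2, s A3 x3 & free3 x1 x2 x3].
Proof.
move=> s [[s01 n01] [s12 n12] [s23 n23]].
have [x1 h1 n1] := strict_subset_elt s01 n01.
have x1n0 : x1 != 0 by apply/eqP => e; apply: n1; rewrite e; apply: closed0.
have [x2 h2 n2] := strict_subset_elt s12 n12.
have I12 : free2 x1 x2.
  by apply: (notin_line_free2 hK x1n0) => hl; apply: n2; apply: closed_line h1 _ hl.
have [x3 h3 n3] := strict_subset_elt s23 n23.
exists x1, x2, x3; split; [exact/s23/s12 | exact/s23 | by [] |].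
by apply: (notin_span2_free3 hK I12) => hs; apply: n3; apply: closed_span2 (s12 _ h1) h2 _ hs.
Qed.

End DualPair.

Section JoinMorphism.
Variables (K1 K2 : unitRingType) (hK1 : division_ring K1) (hK2 : division_ring K2).
Variables (E1 : lmodType K1) (F1 : lmodType K1^c) (b1 : E1 -> F1 -> K1).
Variables (E2 : lmodType K2) (F2 : lmodType K2^c) (b2 : E2 -> F2 -> K2).
Hypotheses (hb1 : dual_pair b1) (hb2 : dual_pair b2).
Variable g : LF b1 -> LF b2.
Hypothesis hjoin : preserves_joins g.
Hypothesis hatom :
  forall A : LF b1, atom A -> atom (g A) \/ proj1_sig (g A) = zero_set (E:=E2).

Definition line1 (v : E1) : LF b1 := exist _ (line v) (line_closed hK1 hb1 v).
Definition gline (v : E1) : E2 -> Prop := proj1_sig (g (line1 v)).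

Lemma g_ext (A B : LF b1) : proj1_sig A = proj1_sig B -> proj1_sig (g A) = proj1_sig (g B).
Proof.
move=> eAB; have e1 : proj1_sig A = cjoin (fun X => X = B).
  by rewrite eAB; symmetry; apply: cjoin_eq => x; split; [case=> X -> | exists B].
rewrite (hjoin e1); apply: cjoin_eq => x; split; first by case=> C [A' -> ->].
by move=> hx; exists (g B) => //; exists B.
Qed.

Lemma g_mono (A B : LF b1) : subset_of (proj1_sig A) (proj1_sig B) ->
  subset_of (proj1_sig (g A)) (proj1_sig (g B)).
Proof.
move=> hAB; have e1 : proj1_sig B = cjoin (fun X => X = A \/ X = B).
  symmetry; apply: cjoin_eq => x; split; first by case=> X [->|->] //; apply: hAB.
  by move=> hx; exists B => //; right.
move=> x hx; rewrite (hjoin e1); apply: perp2_sub.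
by exists (g A) => //; exists A => //; left.
Qed.

Lemma gline0 : gline 0 = zero_set (E:=E2).
Proof.
have e1 : proj1_sig (line1 0) = cjoin (fun _ : LF b1 => False).
  by rewrite /= line0_eq (cjoin_empty hb1) // => _ [].
by rewrite /gline (hjoin e1) (cjoin_empty hb2) // => B [].
Qed.

Lemma line1_atom v : v != 0 -> atom (line1 v).
Proof.
move=> hv; split=> [e|B hB].
  by move/eqP: hv; apply; have : line v v := line_self v; rewrite /= in e; rewrite e.
case: (classic (proj1_sig B = zero_set (E:=E1))) => hz; [by left | right].
have [w Bw wn0] := closed_nonzero_elt hb1 hz; have [c ec] := hB _ Bw.
have cn0 : c != 0 by apply: contraNneq wn0 => c0; rewrite ec c0 scale0r.
have Bv : proj1_sig B v.
  by have := closedZ hb1 c^-1 Bw; rewrite ec scalerA (mulVr_nz hK1 cn0) scale1r.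
by apply: pred_ext => x; split; [apply: hB | apply: (closed_line hb1 Bv)].
Qed.

Lemma gline_line v : exists w, gline v = line w.
Proof.
have [->|hv] := eqVneq v 0; first by exists 0; rewrite gline0 line0_eq.
case: (hatom (line1_atom hv)) => [[hA hat]|hz]; last by exists 0; rewrite /gline hz line0_eq.
have [w Aw wn0] := closed_nonzero_elt hb2 hA.
exists w; case: (hat (exist _ (line w) (line_closed hK2 hb2 w))) => /=.
- exact: (closed_line hb2 Aw).
- by move=> e; exfalso; move/eqP: wn0; apply; have : line w w := line_self w; rewrite e.
- by move=> e; rewrite /gline -e.
Qed.

Definition rep (v : E1) : E2 := epsilon (inhabits 0) (fun w => gline v = line w).
Lemma rep_spec v : gline v = line (rep v).
Proof. exact: (epsilon_spec (inhabits 0) (fun w => gline v = line w) (gline_line v)). Qed.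

(* K1 (a *: u + c *: w) lies below the join of K1 u and K1 w, which g maps
   into the closure of the span of rep u and rep w. *)
Lemma rep_span (u w : E1) (a c : K1) : span2 (rep u) (rep w) (rep (a *: u + c *: w)).
Proof.
set S := fun X : LF b1 => X = line1 u \/ X = line1 w.
pose J : LF b1 := exist _ (cjoin S) (cjoin_closed S).
have hsub : subset_of (proj1_sig (line1 (a *: u + c *: w))) (proj1_sig J).
  move=> x [d ->] y hy /=.
  have bu : b1 u y = 0 by apply: hy; exists (line1 u); [left | apply: line_self].
  have bw : b1 w y = 0 by apply: hy; exists (line1 w); [right | apply: line_self].
  by rewrite (bZl hb1) (bDl hb1) !(bZl hb1) bu bw !mulr0 addr0 mulr0.
have hx : proj1_sig (g J) (rep (a *: u + c *: w)).
  by apply: (g_mono hsub); rewrite -/(gline _) rep_spec; apply: line_self.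
rewrite (hjoin (erefl (proj1_sig J))) in hx.
apply: (span2_closed hK2 hb2); move: hx; apply: perp2_mono => z [C [A' [->|->] ->]].
  by rewrite -/(gline u) rep_spec => -[d ->]; exists d, 0; rewrite scale0r addr0.
by rewrite -/(gline w) rep_spec => -[d ->]; exists 0, d; rewrite scale0r add0r.
Qed.

Lemma g_image_in_span2 (a c : E2) : (forall v, span2 a c (rep v)) ->
  forall A : LF b1, subset_of (proj1_sig (g A)) (span2 a c).
Proof.
move=> Hac A x; set S := fun X : LF b1 => exists2 v, proj1_sig A v & X = line1 v.
have e1 : proj1_sig A = cjoin S.
  symmetry; apply: cjoin_eq => z; split; first by case=> X [v Av ->]; apply: (closed_line hb1 Av).
  by move=> hz; exists (line1 z); [exists z | apply: line_self].
rewrite (hjoin e1) => hx; apply: (span2_closed hK2 hb2); move: hx.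
apply: perp2_mono => z [C [X [v Av ->] ->]]; rewrite -/(gline v) rep_spec => hz.
exact: span2_sub (Hac v) (Hac v) (line_sub_span2 _ hz).
Qed.

(* A chain of length 3 in the image needs three independent vectors in E2,
   which cannot all lie in a plane containing every rep v. *)
Lemma rep_free3 : image_length_ge3 g -> exists p q r, free3 (rep p) (rep q) (rep r).
Proof.
move=> [A0 [A1 [A2 [A3 /(chain4_free3 hK2 hb2) [x1 [x2 [x3 [h1 h2 h3 I3]]]]]]]].
apply: NNPP => /(no_free3_span2 hK2) [a [c Hac]].
by apply: (span2_no_free3 hK2 I3); apply: (g_image_in_span2 Hac (A := A3)).
Qed.

End JoinMorphism.

Unset Implicit Arguments.

Theorem corollary8p4 (K1 K2 : unitRingType)
  (hK1 : division_ring K1) (hK2 : division_ring K2)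
  (E1 : lmodType K1) (F1 : lmodType K1^c) (b1 : E1 -> F1 -> K1) (hb1 : dual_pair b1)
  (E2 : lmodType K2) (F2 : lmodType K2^c) (b2 : E2 -> F2 -> K2) (hb2 : dual_pair b2)
  (g : LF b1 -> LF b2)
  (hjoin : preserves_joins g)
  (hatom : forall A : LF b1, atom A -> atom (g A) \/ proj1_sig (g A) = zero_set (E:=E2))
  (hlen : image_length_ge3 g) :
  exists f : E1 -> E2, semilinear_map f /\
    forall (v : E1) (A : LF b1), proj1_sig A = line v ->
      proj1_sig (g A) = line (f v).
Proof.
have [p [q [r Hpqr]]] := rep_free3 hK1 hK2 hb1 hb2 hjoin hatom hlen.
have [f [hf hfrep]] := semilinear_lift hK2 (rep_span hK1 hK2 hb1 hb2 hjoin hatom) Hpqr.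
exists f; split => // v A eA.
rewrite (g_ext hjoin (B := line1 hK1 hb1 v) eA) -/(gline hK1 hb1 g v).
by rewrite (rep_spec hK1 hK2 hb1 hb2 hjoin hatom v); exact: (proportional_line_eq hK2 (hfrep v)).
Qed.
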